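(* Let $G$ be a group. The following are equivalent: (1) every transitive function $u:\rho\to G$ is trivial; (2) every transitive function $w:\le\;\to G$ on the partial order $\le$ of $\mathcal C$ is trivial; (3) for every function $v:\Gamma_1\to G$ such that $v(a_1)\cdots v(a_r)=v(b_1)\cdots v(b_s)$ for all paths $a_1\cdots a_r$ and $b_1\cdots b_s$ in $\Gamma$ with the same start vertex and the same end vertex, there exists $f:\Gamma_0\to G$ with $v(a)=f(s(a))f(t(a))^{-1}$ for every $a\in\Gamma_1$.
   Context: $\rho$ is a preorder on $\{1,\dots,n\}$; $i\sim j$ iff $i\rho j$ and $j\rho i$; $\mathcal C$ is the set of classes, $\hat i$ the class of $i$, with partial order $\hat i\le\hat j$ iff $i\rho j$. For a preorder (or partial order) $\pi$ on a set $X$, a transitive function on $\pi$ with values in a group $G$ is a map $u:\pi\to G$ (defined on pairs $(x,y)$ with $x\pi y$) such that $u(x,y)u(y,z)=u(x,z)$ whenever $x\pi y$, $y\pi z$; it is trivial if there are $g_x\in G$ ($x\in X$) with $u(x,y)=g_xg_y^{-1}$ for all $x\pi y$. $\Gamma=(\Gamma_0,\Gamma_1)$ is the directed graph with vertex set $\Gamma_0=\mathcal C$ and an arrow $a$ from $\alpha$ to $\beta$ (written $s(a)=\alpha$, $t(a)=\beta$) iff $\alpha<\beta$ and there is no $\gamma$ with $\alpha<\gamma<\beta$ (the Hasse diagram). A path $a_1\cdots a_r$ means arrows with $t(a_i)=s(a_{i+1})$. *)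

From HB Require Import structures.
From mathcomp Require Import all_boot.
Set Implicit Arguments. Unset Strict Implicit. Unset Printing Implicit Defensive.
Local Open Scope group_scope.

(* A function on r (defined on pairs (x,y) with r x y) is
   represented by a total map X -> X -> G of which only the values on related
   pairs are ever used. *)
Definition transitive_fun (G : groupType) (X : Type) (r : X -> X -> bool)
    (u : X -> X -> G) : Prop :=
  forall x y z, r x y -> r y z -> u x y * u y z = u x z.

Definition trivial_fun (G : groupType) (X : Type) (r : X -> X -> bool)
    (u : X -> X -> G) : Prop :=
  exists g : X -> G, forall x y, r x y -> u x y = g x * (g y)^-1.

Definition is_preorder (n : nat) (rho : rel 'I_n) : Prop :=
  reflexive rho /\ transitive rho.

Section Classes.
Variables (n : nat) (rho : rel 'I_n).

Definition equivp (i j : 'I_n) : bool := rho i j && rho j i.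

Definition cls_of (i : 'I_n) : {set 'I_n} := [set j | equivp i j].

Definition classes : {set {set 'I_n}} := [set cls_of i | i : 'I_n].

(* the type of classes (vertex set Gamma_0 of the Hasse diagram) *)
Definition cls : Type := {A : {set 'I_n} | A \in classes}.

Definition cle (a b : cls) : bool :=
  [exists i : 'I_n, exists j : 'I_n,
     [&& val a == cls_of i, val b == cls_of j & rho i j]].

Definition clt (a b : cls) : bool := (a != b) && cle a b.

(* arrows of the Hasse diagram Gamma: a -> b iff a < b with nothing between;
   there is at most one arrow between two vertices, so Gamma_1 is identified
   with the set of pairs (a, b) with hasse_arrow a b, s = first component,
   t = second component. *)
Definition hasse_arrow (a b : cls) : bool :=
  clt a b && ~~ [exists c : cls, clt a c && clt c b].

(* a path in Gamma starting at vertex a is given by the sequence s of the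
   successive target vertices of its arrows; it ends at last a s. *)
Definition hasse_path (a : cls) (s : seq cls) : bool := path hasse_arrow a s.

Fixpoint path_prod (G : groupType) (v : cls -> cls -> G) (a : cls) (s : seq cls)
    : G :=
  match s with
  | [::] => 1
  | b :: s' => v a b * path_prod v b s'
  end.

End Classes.

From HB Require Import structures.
From mathcomp Require Import all_boot.
Set Implicit Arguments. Unset Strict Implicit. Unset Printing Implicit Defensive.
Local Open Scope group_scope.

(* A transitive function on the preorder rho is the same thing as a transitive
   function on the poset of classes, up to the correction g i := u i (rep i)
   comparing each index with a fixed representative of its class.  On the
   finite poset of classes, every comparable pair a <= b is joined by a path
   of covering arrows, so a transitive function w is determined by its values
   on arrows: conversely, a function v on arrows whose path products depend
   only on the endpoints extends to w a b := the product along any path from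
   a to b, and a potential f for w is exactly a potential for v. *)

Lemma path_le_last (T : Type) (le : rel T) (x : T) (s : seq T) :
  reflexive le -> transitive le -> path le x s -> le x (last x s).
Proof.
move=> le_refl le_trans; elim: s x => [|y s IH] x /=; first by rewrite le_refl.
by case/andP=> le_xy /IH; apply: le_trans.
Qed.

Section FiniteOrder.
Variables (T : finType) (le : rel T).

Definition strict (a b : T) : bool := (a != b) && le a b.

Definition covers (a b : T) : bool :=
  strict a b && ~~ [exists c, strict a c && strict c b].

Definition interval (a b : T) : {set T} := [set c | le a c && le c b].

Lemma covers_le : subrel covers le.
Proof. by move=> a b /andP[/andP[]]. Qed.

Hypotheses (le_refl : reflexive le) (le_trans : transitive le)
           (le_anti : antisymmetric le).

Lemma interval_proper_r (a b c : T) :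
  le a c -> strict c b -> interval a c \proper interval a b.
Proof.
move=> le_ac /andP[ne_cb le_cb]; apply/properP; split.
  apply/subsetP => x; rewrite !inE => /andP[-> le_xc].
  exact: le_trans le_xc le_cb.
exists b; first by rewrite inE (le_trans le_ac le_cb) le_refl.
rewrite inE negb_and; apply/orP; right; apply: contra ne_cb => le_bc.
by apply/eqP/le_anti; rewrite le_cb.
Qed.

Lemma interval_proper_l (a b c : T) :
  strict a c -> le c b -> interval c b \proper interval a b.
Proof.
move=> /andP[ne_ac le_ac] le_cb; apply/properP; split.
  apply/subsetP => x; rewrite !inE => /andP[le_cx ->].
  by rewrite (le_trans le_ac le_cx).
exists a; first by rewrite inE (le_trans le_ac le_cb) le_refl.
rewrite inE negb_and; apply/orP; left; apply: contra ne_ac => le_ca.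
by apply/eqP/le_anti; rewrite le_ac.
Qed.

(* Induction on the size of the interval [a, b]: if a < b is not a covering
   pair, some c splits it into two strictly smaller intervals. *)
Lemma le_covers_path (a b : T) :
  le a b -> exists2 s, path covers a s & last a s = b.
Proof.
move: {2}#|_|.+1 (ltnSn #|interval a b|) => k.
elim: k a b => // k IH a b; rewrite ltnS => small_ab le_ab.
have [<-|ne_ab] := eqVneq a b; first by exists [::].
have [cov_ab|] := boolP (covers a b); first by exists [:: b]; rewrite /= ?cov_ab.
rewrite /covers /strict ne_ab le_ab negbK => /existsP[c /andP[lt_ac lt_cb]].
have le_ac : le a c by case/andP: lt_ac.
have le_cb : le c b by case/andP: lt_cb.
have [s Pac Lac] := IH a c
  (leq_trans (proper_card (interval_proper_r le_ac lt_cb)) small_ab) le_ac.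
have [t Pcb Lcb] := IH c b
  (leq_trans (proper_card (interval_proper_l lt_ac le_cb)) small_ab) le_cb.
by exists (s ++ t); rewrite ?cat_path ?last_cat Lac ?Pac.
Qed.

End FiniteOrder.

Section Classes.
Variables (n : nat) (rho : rel 'I_n).

Lemma cls_of_in_classes (i : 'I_n) : cls_of rho i \in classes rho.
Proof. exact: imset_f. Qed.

Definition to_cls (i : 'I_n) : cls rho :=
  exist _ (cls_of rho i) (cls_of_in_classes i).

Lemma cls_rep_ex (a : cls rho) : exists i, val a == cls_of rho i.
Proof. by case: a => A /= /imsetP[i _ ->]; exists i. Qed.

Definition cls_rep (a : cls rho) : 'I_n := xchoose (cls_rep_ex a).

Lemma cls_rep_spec (a : cls rho) : val a = cls_of rho (cls_rep a).
Proof. exact/eqP/(xchooseP (cls_rep_ex a)). Qed.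

Lemma cls_repK : cancel cls_rep to_cls.
Proof. by move=> a; apply: val_inj; rewrite /= -cls_rep_spec. Qed.

Lemma hasse_arrow_cle : subrel (@hasse_arrow n rho) (@cle n rho).
Proof. exact: covers_le. Qed.

Lemma hasse_path_cle (a : cls rho) (s : seq (cls rho)) :
  hasse_path a s -> path (@cle n rho) a s.
Proof. exact: (sub_path (@hasse_arrow_cle)). Qed.

Hypotheses (rho_refl : reflexive rho) (rho_trans : transitive rho).

Lemma eq_cls_of (i j : 'I_n) : (cls_of rho i == cls_of rho j) = equivp rho i j.
Proof.
apply/eqP/idP => [eq_ij | /andP[rho_ij rho_ji]].
  have : j \in cls_of rho j by rewrite inE /equivp rho_refl.
  by rewrite -eq_ij inE.
apply/setP => k; rewrite !inE /equivp.
apply/andP/andP => [[rho_ik rho_ki] | [rho_jk rho_kj]]; split.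
- exact: rho_trans rho_ik.
- exact: rho_trans rho_ij.
- exact: rho_trans rho_jk.
- exact: rho_trans rho_ji.
Qed.

Lemma equivp_rep_to_cls (i : 'I_n) : equivp rho i (cls_rep (to_cls i)).
Proof. by rewrite -eq_cls_of -cls_rep_spec. Qed.

Lemma cle_to_cls (i j : 'I_n) : cle (to_cls i) (to_cls j) = rho i j.
Proof.
apply/existsP/idP => [[i' /existsP[j' /and3P[eq_ii' eq_jj' rho_i'j']]] | rho_ij].
  move: eq_ii' eq_jj'; rewrite !eq_cls_of => /andP[rho_ii' _] /andP[_ rho_j'j].
  exact: rho_trans rho_ii' (rho_trans rho_i'j' rho_j'j).
by exists i; apply/existsP; exists j; rewrite !eqxx.
Qed.

Lemma cle_rep (a b : cls rho) : cle a b = rho (cls_rep a) (cls_rep b).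
Proof. by rewrite -cle_to_cls !cls_repK. Qed.

Lemma cle_refl : reflexive (@cle n rho).
Proof. by move=> a; rewrite cle_rep. Qed.

Lemma cle_trans : transitive (@cle n rho).
Proof. by move=> b a c; rewrite !cle_rep; apply: rho_trans. Qed.

Lemma cle_anti : antisymmetric (@cle n rho).
Proof.
move=> a b; rewrite !cle_rep => rho_ab_ba.
by apply: val_inj; rewrite !cls_rep_spec; apply/eqP; rewrite eq_cls_of.
Qed.

Lemma cle_hasse_path (a b : cls rho) :
  cle a b -> exists2 s, hasse_path a s & last a s = b.
Proof. exact: le_covers_path cle_refl cle_trans cle_anti a b. Qed.

Lemma hasse_walk_exists :
  exists walk : cls rho -> cls rho -> seq (cls rho),
    forall a b, cle a b -> hasse_path a (walk a b) /\ last a (walk a b) = b.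
Proof.
have walk_ex (a b : cls rho) :
    exists s, cle a b ==> hasse_path a s && (last a s == b).
  have [le_ab | _] := boolP (cle a b); last by exists [::].
  by have [s Ps Ls] := cle_hasse_path le_ab; exists s; rewrite Ps Ls eqxx.
exists (fun a b => xchoose (walk_ex a b)) => a b le_ab.
by have /implyP/(_ le_ab)/andP[-> /eqP ->] := xchooseP (walk_ex a b).
Qed.

End Classes.

Section TransitiveFunctions.
Variables (G : groupType) (X : Type) (r : X -> X -> bool).

Definition transitive_funs_trivial : Prop :=
  forall u : X -> X -> G, transitive_fun r u -> trivial_fun r u.

Lemma transitive_fun_diag (u : X -> X -> G) (x : X) :
  transitive_fun r u -> r x x -> u x x = 1.
Proof.
by move=> u_trans r_xx; apply: (@mulIg _ (u x x)); rewrite mul1g u_trans.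
Qed.

Lemma transitive_fun_inv (u : X -> X -> G) (x y : X) :
  transitive_fun r u -> r x y -> r y x -> r x x -> (u x y)^-1 = u y x.
Proof.
move=> u_trans r_xy r_yx r_xx.
by apply: mulg1_eq; rewrite u_trans // (transitive_fun_diag u_trans).
Qed.

Lemma transitive_fun_comap (Y : Type) (s : rel Y) (f : Y -> X) (w : X -> X -> G) :
  {homo f : x y / s x y >-> r x y} ->
  transitive_fun r w -> transitive_fun s (fun x y => w (f x) (f y)).
Proof.
by move=> f_homo w_trans x y z /f_homo s_xy /f_homo s_yz; apply: w_trans.
Qed.

Lemma trivial_fun_retract (Y : Type) (s : rel Y) (f : X -> Y) (g : Y -> X)
    (w : Y -> Y -> G) :
  cancel g f -> {homo g : x y / s x y >-> r x y} ->
  trivial_fun r (fun x y => w (f x) (f y)) -> trivial_fun s w.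
Proof.
move=> gK g_homo [h w_h]; exists (h \o g) => x y /g_homo r_gxy.
by rewrite -w_h // !gK.
Qed.

End TransitiveFunctions.

Section PathProducts.
Variables (n : nat) (rho : rel 'I_n) (G : groupType).

Definition hasse_path_independent (v : cls rho -> cls rho -> G) : Prop :=
  forall (a : cls rho) (s t : seq (cls rho)),
    hasse_path a s -> hasse_path a t -> last a s = last a t ->
    path_prod v a s = path_prod v a t.

Definition hasse_coboundary (v : cls rho -> cls rho -> G) : Prop :=
  exists f : cls rho -> G,
    forall a b : cls rho, hasse_arrow a b -> v a b = f a * (f b)^-1.

Lemma path_prod_cat (v : cls rho -> cls rho -> G) (a : cls rho)
    (s t : seq (cls rho)) :
  path_prod v a (s ++ t) = path_prod v a s * path_prod v (last a s) t.
Proof. by elim: s a => [|b s IH] a /=; rewrite ?mul1g // IH mulgA. Qed.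

Lemma path_prod_coboundary (v : cls rho -> cls rho -> G) (f : cls rho -> G)
    (a : cls rho) (s : seq (cls rho)) :
  (forall b c, hasse_arrow b c -> v b c = f b * (f c)^-1) ->
  hasse_path a s -> path_prod v a s = f a * (f (last a s))^-1.
Proof.
move=> v_f; elim: s a => [|b s IH] a /=; first by rewrite mulgV.
by case/andP=> arrow_ab /IH->; rewrite v_f // mulgA mulgVK.
Qed.

Hypotheses (rho_refl : reflexive rho) (rho_trans : transitive rho).

Lemma path_prod_transitive_fun (w : cls rho -> cls rho -> G) (a : cls rho)
    (s : seq (cls rho)) :
  transitive_fun (@cle n rho) w -> path (@cle n rho) a s ->
  path_prod w a s = w a (last a s).
Proof.
move=> w_trans; elim: s a => [|b s IH] a /=.
  by rewrite (transitive_fun_diag w_trans) ?cle_refl.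
case/andP=> le_ab Pbs; rewrite IH // w_trans //.
exact: path_le_last (cle_refl rho_refl rho_trans) (cle_trans rho_refl rho_trans)
  Pbs.
Qed.

End PathProducts.

Section Equivalences.
Variables (n : nat) (rho : rel 'I_n) (G : groupType).
Hypotheses (rho_refl : reflexive rho) (rho_trans : transitive rho).

Lemma transitive_funs_trivial_cle :
  transitive_funs_trivial G rho -> transitive_funs_trivial G (@cle n rho).
Proof.
move=> triv_rho w w_trans.
apply: (trivial_fun_retract (r := rho) (cls_repK (rho := rho))).
-
 by move=> a b; rewrite cle_rep.
- by apply/triv_rho/(transitive_fun_comap _ w_trans) => i j; rewrite cle_to_cls.
Qed.

Lemma transitive_funs_trivial_of_cle :
  transitive_funs_trivial G (@cle n rho) -> transitive_funs_trivial G rho.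
Proof.
move=> triv_cle u u_trans.
have [h u_h] : trivial_fun (@cle n rho) (fun a b => u (cls_rep a) (cls_rep b)).
  by apply/triv_cle/(transitive_fun_comap _ u_trans) => a b; rewrite cle_rep.
exists (fun i => u i (cls_rep (to_cls rho i)) * h (to_cls rho i)) => i j rho_ij.
have /andP[rho_i_ri rho_ri_i] := equivp_rep_to_cls rho_refl rho_trans i.
have /andP[rho_j_rj rho_rj_j] := equivp_rep_to_cls rho_refl rho_trans j.
have rho_ri_rj : rho (cls_rep (to_cls rho i)) (cls_rep (to_cls rho j)).
  by rewrite -(cle_rep rho_refl rho_trans) cle_to_cls.
have rho_i_rj : rho i (cls_rep (to_cls rho j)) by apply: rho_trans rho_j_rj.
rewrite invgM mulgA -(mulgA _ (h _)) -u_h ?cle_rep //.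
by rewrite (transitive_fun_inv u_trans) // !u_trans.
Qed.

Lemma hasse_coboundary_of_trivial :
  transitive_funs_trivial G (@cle n rho) ->
  forall v : cls rho -> cls rho -> G,
    hasse_path_independent v -> hasse_coboundary v.
Proof.
move=> triv_cle v v_indep.
have [walk walkP] := hasse_walk_exists rho_refl rho_trans.
pose w a b := path_prod v a (walk a b).
have w_trans : transitive_fun (@cle n rho) w.
  move=> a b c le_ab le_bc.
  have [Pab Lab] := walkP a b le_ab; have [Pbc Lbc] := walkP b c le_bc.
  have [Pac Lac] := walkP a c (cle_trans rho_refl rho_trans le_ab le_bc).
  rewrite /w -{2}Lab -path_prod_cat; apply: v_indep => //.
    by move: Pab Pbc; rewrite /hasse_path cat_path Lab => -> ->.
  by rewrite last_cat Lab Lbc Lac.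
have [f w_f] := triv_cle w w_trans; exists f => a b arrow_ab.
have le_ab := hasse_arrow_cle arrow_ab; have [Pab Lab] := walkP a b le_ab.
rewrite -w_f // /w -(v_indep a [:: b]) /= ?mulg1 // ?Lab //.
by rewrite /hasse_path /= arrow_ab.
Qed.

Lemma trivial_of_hasse_coboundary :
  (forall v : cls rho -> cls rho -> G,
     hasse_path_independent v -> hasse_coboundary v) ->
  transitive_funs_trivial G (@cle n rho).
Proof.
move=> cobound w w_trans.
have [f w_f] : hasse_coboundary w.
  apply: cobound => a s t Ps Pt Lst.
  by rewrite !path_prod_transitive_fun ?hasse_path_cle ?Lst.
exists f => a b /(cle_hasse_path rho_refl rho_trans)[s Ps <-].
rewrite -path_prod_transitive_fun ?hasse_path_cle //.
exact: path_prod_coboundary w_f Ps.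
Qed.

End Equivalences.

Theorem proposition5p4 (n : nat) (rho : rel 'I_n) (G : groupType) :
  is_preorder rho ->
  [<-> (* (1) *)
       (forall u : 'I_n -> 'I_n -> G,
          transitive_fun rho u -> trivial_fun rho u);
       (* (2) *)
       (forall w : cls rho -> cls rho -> G,
          transitive_fun (@cle n rho) w -> trivial_fun (@cle n rho) w);
       (* (3) *)
       (forall v : cls rho -> cls rho -> G,
          (forall (a : cls rho) (s t : seq (cls rho)),
             hasse_path a s -> hasse_path a t -> last a s = last a t ->
             path_prod v a s = path_prod v a t) ->
          exists f : cls rho -> G,
            forall a b : cls rho, hasse_arrow a b -> v a b = f a * (f b)^-1)].
Proof.
case=> rho_refl rho_trans; tfae.
- exact: transitive_funs_trivial_cle.
- exact: hasse_coboundary_of_trivial.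
- move=> cobound.
  exact/transitive_funs_trivial_of_cle/trivial_of_hasse_coboundary.
Qed.
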